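(* Let $V$ be a finite set of nodes with $|V|\ge2$ and $L\ge1$; each $v\in V$ has coordinates $x_1^v,\dots,x_L^v\in[0,1)$, pairwise distinct within each space. Suppose the network on $V$ is a correct FedLay overlay with neighbor sets $N_v$. A node $u\in V$ fails: it is removed, and every remaining node $v$ keeps neighbor set $N_v\setminus\{u\}$. Fix a space $i$ and let $p\ne u$ be a node adjacent to $u$ in space $i$ (before the failure), and let $q$ denote the other adjacent node of $u$ in space $i$ before the failure (so $q$ is the predecessor of $u$ if $p$ is its successor, and vice versa; possibly $q=p$). Suppose $u$ is the successor of $p$ (the case where $u$ is the predecessor is symmetric, with the roles of $\ell^-$ and $\ell^+$ below exchanged). Starting at $p$, a Neighbor_repair message with destination $x_i^u$ is routed in the decreasing direction as follows: a node $v$ holding it considers $S_v=\{w\in N_v\setminus\{u\}:\ \ell^-(x_i^w,x_i^u)<\ell^-(x_i^v,x_i^u)\}$; if $S_v\neq\emptyset$, $v$ forwards the message to a $w'\in S_v$ minimizing $\ell^-(x_i^{w},x_i^u)$ over $S_v$; otherwise the message stops at $v$. Then the message stops, and the node at which it stops is $q$. Symmetrically, if $u$ is the predecessor of $p$ and routing uses $\ell^+$ in place of $\ell^-$, the message stops at $q$.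
   Context: Coordinates lie on a circle of perimeter $1$ (modulo $1$). In space $i$, the successor of $v$ is the node reached first from $x_i^v$ moving in the direction of increasing coordinate (mod 1), and the predecessor is the node reached first moving in the decreasing direction; these are the two adjacent nodes of $v$ in space $i$. For $y,z\in[0,1)$ define the arc lengths $\ell^-(y,z)=(y-z)\bmod 1$ (length travelled from $y$ to $z$ in the decreasing direction) and $\ell^+(y,z)=(z-y)\bmod 1$. A FedLay network is correct if every node $v$ has neighbor set $N_v$ equal to the set of nodes adjacent to $v$ in at least one of the $L$ spaces (and no others), and each node knows its neighbors' coordinates. *)

From HB Require Import structures.
From mathcomp Require Import all_boot all_order all_algebra.
From mathcomp Require Import reals.
Set Implicit Arguments. Unset Strict Implicit. Unset Printing Implicit Defensive.
Import Order.TTheory GRing.Theory Num.Theory.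
Local Open Scope ring_scope.

Definition mod1 {R : realType} (a : R) : R := a - (Num.floor a)%:~R.

Definition ellm {R : realType} (y z : R) : R := mod1 (y - z).
Definition ellp {R : realType} (y z : R) : R := mod1 (z - y).

Section FedLay.
Context {R : realType} {V : finType} {L : nat}.
Variable x : 'I_L -> V -> R.

Definition is_succ (i : 'I_L) (v w : V) : Prop :=
  w != v /\ forall w', w' != v -> ellp (x i v) (x i w) <= ellp (x i v) (x i w').
Definition is_pred (i : 'I_L) (v w : V) : Prop :=
  w != v /\ forall w', w' != v -> ellm (x i v) (x i w) <= ellm (x i v) (x i w').

Definition adjacent (i : 'I_L) (v w : V) : Prop := is_succ i v w \/ is_pred i v w.

Definition fedlay_correct (N : V -> {set V}) : Prop :=
  forall v w, w \in N v <-> exists i, adjacent i v w.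

(* Neighbor_repair routing after failure of u, towards x_i^u, w.r.t. the
   arc-length d (ellm for decreasing direction, ellp for increasing). *)
Definition repair_cand (N : V -> {set V}) (u : V) (i : 'I_L)
    (d : R -> R -> R) (v : V) : {set V} :=
  [set w in N v :\ u | d (x i w) (x i u) < d (x i v) (x i u)].

Definition repair_step (N : V -> {set V}) (u : V) (i : 'I_L)
    (d : R -> R -> R) (v w : V) : bool :=
  (w \in repair_cand N u i d v) &&
  [forall w', (w' \in repair_cand N u i d v) ==>
                (d (x i w) (x i u) <= d (x i w') (x i u))].

Definition repair_stops (N : V -> {set V}) (u : V) (i : 'I_L)
    (d : R -> R -> R) (v : V) : Prop := repair_cand N u i d v = set0.

(* The message started at p stops, and it stops at q:
   no infinite run exists, and every run that reaches a stopping node ends at q. *)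
Definition repair_ends_at (N : V -> {set V}) (u : V) (i : 'I_L)
    (d : R -> R -> R) (p q : V) : Prop :=
  (~ exists f : nat -> V, f 0%N = p /\
       forall k, repair_step N u i d (f k) (f k.+1)) /\
  (forall s : seq V, path (repair_step N u i d) p s ->
       repair_stops N u i d (last p s) -> last p s = q).
End FedLay.

From HB Require Import structures.
From mathcomp Require Import all_boot all_order all_algebra.
From mathcomp Require Import reals.
From mathcomp Require Import lra.
Import Order.TTheory GRing.Theory Num.Theory.
Local Open Scope ring_scope.

(* Both arc lengths are instances of a cyclic distance d: values in [0,1),
   positive between distinct nodes, and additive modulo 1 through any third
   point.  Every hop strictly decreases d(., u), so on a finite node set the
   message stops.  If it stopped at v <> q, then q would lie strictly between
   v and u; hence so would the node nearest to v in the routing direction,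
   which is a neighbour of v by correctness, and v could still forward.
   Only p <> u matters about the start: the message reaches q from any
   live node. *)

Lemma no_infinite_descent (T : finType) disp (X : porderType disp)
    (g : T -> X) (f : nat -> T) :
  ~ (forall k, (g (f k.+1) < g (f k))%O).
Proof.
move=> g_desc.
have g_mono : {homo f : m n / (m < n)%N >-> (g n < g m)%O}.
  apply: (homo_ltn (r := fun a b => g b < g a)%O) => // y z t /= gyz gty.
  exact: (lt_trans gty gyz).
have f_inj : injective (fun k : 'I_#|T|.+1 => f k).
  move=> m n /= fmn; apply/val_inj.
  by case: (ltngtP m n) => // /g_mono; rewrite fmn ltxx.
by have := leq_card _ f_inj; rewrite card_ord ltnn.
Qed.

Section Mod1.
Context {R : realType}.
Implicit Types a b c : R.

Lemma mod1_ge0 a : 0 <= mod1 a.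
Proof. by rewrite /mod1 subr_ge0 floor_le. Qed.

Lemma mod1_lt1 a : mod1 a < 1.
Proof. by have := floorD1_gt a; rewrite intrD /mod1; lra. Qed.

Lemma mod1_id a : 0 <= a < 1 -> mod1 a = a.
Proof. by move=> a01; rewrite /mod1 (@floor_def _ _ 0) ?subr0 ?add0r. Qed.

Lemma mod1DrZ a (n : int) : mod1 (a + n%:~R) = mod1 a.
Proof. by rewrite /mod1 floorDrz ?intr_int // intrKfloor intrD; lra. Qed.

Lemma mod1D a b :
  mod1 (a + b) = mod1 a + mod1 b \/ mod1 (a + b) = mod1 a + mod1 b - 1.
Proof.
have -> : a + b = mod1 a + mod1 b + (Num.floor a + Num.floor b)%:~R.
  by rewrite intrD /mod1; lra.
rewrite mod1DrZ.
have := mod1_ge0 a; have := mod1_ge0 b; have := mod1_lt1 a; have := mod1_lt1 b.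
have [lt1|ge1] := ltP (mod1 a + mod1 b) 1 => *.
  by left; rewrite mod1_id //; apply/andP; split; lra.
right; have -> : mod1 (mod1 a + mod1 b) = mod1 (mod1 a + mod1 b - 1).
  by rewrite -(mod1DrZ (mod1 a + mod1 b - 1) 1) subrK.
by rewrite mod1_id //; apply/andP; split; lra.
Qed.

Lemma mod1_subr_gt0 a b : 0 <= a < 1 -> 0 <= b < 1 -> a != b -> 0 < mod1 (a - b).
Proof.
move=> /andP[a_ge0 a_lt1] /andP[b_ge0 b_lt1].
rewrite neq_lt => /orP[ltab|ltba].
- rewrite -(mod1DrZ _ 1) mod1_id; first lra.
  by apply/andP; split; lra.
- by rewrite mod1_id ?subr_gt0 //; apply/andP; split; lra.
Qed.

Lemma ellm_lt1 a b : ellm a b < 1.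
Proof. exact: mod1_lt1. Qed.

Lemma ellm_gt0 a b : 0 <= a < 1 -> 0 <= b < 1 -> a != b -> 0 < ellm a b.
Proof. exact: mod1_subr_gt0. Qed.

Lemma ellm_split a b c :
  ellm a b = ellm a c + ellm c b \/ ellm a b = ellm a c + ellm c b - 1.
Proof. by rewrite /ellm -(subrKA c); exact: mod1D. Qed.

Lemma ellp_lt1 a b : ellp a b < 1.
Proof. exact: mod1_lt1. Qed.

Lemma ellp_gt0 a b : 0 <= a < 1 -> 0 <= b < 1 -> a != b -> 0 < ellp a b.
Proof. by move=> a01 b01 ab; apply: ellm_gt0; rewrite 1?eq_sym. Qed.

Lemma ellp_split a b c :
  ellp a b = ellp a c + ellp c b \/ ellp a b = ellp a c + ellp c b - 1.
Proof. by rewrite /ellp (addrC (mod1 (c - a))); exact: ellm_split. Qed.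

End Mod1.

Section NeighborRepair.
Context {R : realType} {V : finType} {L : nat}.
Variables (x : 'I_L -> V -> R) (N : V -> {set V}) (i : 'I_L) (D : R -> R -> R).
Local Notation d v w := (D (x i v) (x i w)).
Local Notation step u := (repair_step x N u i D).

Hypothesis d_lt1 : forall v w, d v w < 1.
Hypothesis d_gt0 : forall v w, v != w -> 0 < d v w.
Hypothesis d_split : forall v w c, d v w = d v c + d c w \/ d v w = d v c + d c w - 1.

Lemma d_lt_between v w c : v != c -> c != w -> (d v c < d v w) = (d c w < d v w).
Proof.
move=> vc cw; have := d_gt0 _ _ vc; have := d_gt0 _ _ cw.
have := d_lt1 v c; have := d_lt1 c w.
by case: (d_split v w c) => -> *; apply/idP/idP => ?; lra.
Qed.

Lemma d_inj_l u v w : d v u = d w u -> v = w.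
Proof.
move=> e; apply/eqP; apply/negPn/negP => vw.
have := d_gt0 _ _ vw; have := d_lt1 v w.
by case: (d_split v u w); rewrite e; lra.
Qed.

Lemma repair_stepP u v w : step u v w -> w \in N v :\ u /\ d w u < d v u.
Proof. by case/andP; rewrite inE => /andP[]. Qed.

Lemma repair_run_finite u (f : nat -> V) : ~ (forall k, step u (f k) (f k.+1)).
Proof.
move=> run; apply: (@no_infinite_descent V _ R (fun v => d v u) f) => k.
by case/repair_stepP: (run k).
Qed.

Lemma repair_path_last_neq u p s : p != u -> path (step u) p s -> last p s != u.
Proof.
case/lastP: s => [//|s w] _; rewrite last_rcons rcons_path.
by case/andP=> _ /repair_stepP[]; rewrite !inE => /andP[].
Qed.

Variables u q : V.
Hypothesis N_nearest :
  forall v w, w != v -> (forall w', w' != v -> d v w <= d v w') -> w \in N v.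
Hypothesis q_neq_u : q != u.
Hypothesis q_nearest : forall w, w != u -> d q u <= d w u.

Lemma repair_stops_nearest v : v != u -> repair_stops x N u i D v -> v = q.
Proof.
move=> vu stop; apply/eqP/negPn/negP => vq.
have qv : q != v by rewrite eq_sym.
have q_closer : d q u < d v u.
  by rewrite lt_neqAle q_nearest // andbT; apply: contra qv => /eqP/d_inj_l ->.
have vq_lt : d v q < d v u by rewrite d_lt_between.
have [w wv w_nearest] : exists2 w, w != v & forall w', w' != v -> d v w <= d v w'.
  by case: (arg_minP (P := fun w => w != v) (fun w => d v w) qv) => w; exists w.
have vw_lt : d v w < d v u := le_lt_trans (w_nearest q qv) vq_lt.
have wu : w != u by apply: contraTneq vw_lt => ->; rewrite ltxx.
have : w \in repair_cand x N u i D v.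
  by rewrite !inE wu N_nearest //= -d_lt_between // eq_sym.
by rewrite stop inE.
Qed.

Lemma repair_ends_at_nearest p : p != u -> repair_ends_at x N u i D p q.
Proof.
move=> pu; split=> [[f [_ run]]|s s_path]; first exact: repair_run_finite run.
by apply: repair_stops_nearest; apply: repair_path_last_neq s_path.
Qed.

End NeighborRepair.

Theorem theorem2 (R : realType) (V : finType) (L : nat)
    (x : 'I_L -> V -> R) (N : V -> {set V}) (u p q : V) (i : 'I_L) :
  (1 < #|V|)%N -> (0 < L)%N ->
  (forall j v, 0 <= x j v < 1) ->
  (forall j, injective (x j)) ->
  fedlay_correct x N ->
  p != u ->
  (* case 1: u is the successor of p; then q is the other adjacent node of u,
     namely its successor; routing in the decreasing direction *)
  (is_succ x i p u -> is_succ x i u q -> repair_ends_at x N u i ellm p q) /\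
  (* case 2: u is the predecessor of p; q is the predecessor of u;
     routing in the increasing direction *)
  (is_pred x i p u -> is_pred x i u q -> repair_ends_at x N u i ellp p q).
Proof.
move=> _ _ x01 x_inj N_correct pu.
have x_neq v w : v != w -> x i v != x i w by rewrite (inj_eq (x_inj i)).
have N_adj v w : adjacent x i v w -> w \in N v by move=> vw; apply/N_correct; exists i.
split=> _ [qu q_nearest]; apply: repair_ends_at_nearest => //.
- by move=> v w; apply: ellm_lt1.
- by move=> v w /x_neq; apply: ellm_gt0.
- by move=> v w c; apply: ellm_split.
- by move=> v w wv w_nearest; apply: N_adj; right.
- by move=> v w; apply: ellp_lt1.
- by move=> v w /x_neq; apply: ellp_gt0.
- by move=> v w c; apply: ellp_split.
- by move=> v w wv w_nearest; apply: N_adj; left.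
Qed.
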